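(* Let $n\geq 1$ and let $i,j\geq 0$ be integers. Let $W_{n,i,j}$ be the set of triply rooted trees on $[n]$ in which the depth of the second root is $i$ and the depth of the third root is $j$. Then \[ |W_{n,i,j}|=\sum_{d=0}^{\min(i,j)}\frac{(i+j-d+1)\, n!}{(n-i-j+d-1)!}\,n^{\,n-i-j+d-2}, \] with the convention that $1/m!=0$ for negative integers $m$.
   Context: A triply rooted tree on $[n]=\{1,\dots,n\}$ is a labeled tree with vertex set $[n]$ together with three distinguished vertices $r_1,r_2,r_3$ (first, second, third root), not necessarily distinct. The depth of a vertex $v$ is the number of edges on the unique path from the first root $r_1$ to $v$. *)

From mathcomp Require Import all_boot all_order all_algebra.
From mathcomp Require Import boolp.
Set Implicit Arguments. Unset Strict Implicit. Unset Printing Implicit Defensive.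
Import Order.TTheory GRing.Theory Num.Theory.

(* Vertex set [n] is represented by 'I_n (labels 0..n-1).
   A graph on [n] is given by its edge set: a set of 2-element subsets. *)
Section Trees.
Variable n : nat.

Definition adj (E : {set {set 'I_n}}) : rel 'I_n :=
  fun x y => [set x; y] \in E.

Definition simple_graph (E : {set {set 'I_n}}) : Prop :=
  forall e, e \in E -> #|e| = 2.

Definition connected (E : {set {set 'I_n}}) : Prop :=
  forall x y : 'I_n, connect (adj E) x y.

Definition acyclic (E : {set {set 'I_n}}) : Prop :=
  forall c : seq 'I_n, uniq c -> 3 <= size c -> ~~ cycle (adj E) c.

Definition is_tree (E : {set {set 'I_n}}) : Prop :=
  [/\ simple_graph E, connected E & acyclic E].

(* the (unique, in a tree) path from r to v has d edges *)
Definition has_depth (E : {set {set 'I_n}}) (r v : 'I_n) (d : nat) : Prop :=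
  exists p : seq 'I_n,
    [/\ path (adj E) r p, last r p = v, uniq (r :: p) & size p = d].

(* triply rooted trees (E, r1, r2, r3) with depth(r2) = i, depth(r3) = j *)
Definition W (i j : nat) :
  {set {set {set 'I_n}} * 'I_n * 'I_n * 'I_n} :=
  [set x | `[< is_tree x.1.1.1 /\ has_depth x.1.1.1 x.1.1.2 x.1.2 i
                              /\ has_depth x.1.1.1 x.1.1.2 x.2 j >] ].
End Trees.

Definition inv_fact (m : int) : rat :=
  match m with Posz k => (k`!%:R)^-1 | Negz _ => 0 end.

Local Open Scope ring_scope.
Definition W_formula (n i j : nat) : rat :=
  \sum_(0 <= d < (minn i j).+1)
     let m : int := n%:Z - i%:Z - j%:Z + d%:Z - 1 in
     (i + j - d + 1)%N%:R * n`!%:R * inv_fact m * (n%:R ^ (m - 1)).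

From mathcomp Require Import all_boot all_order all_algebra.
From mathcomp Require Import boolp zify ring.
Set Implicit Arguments. Unset Strict Implicit. Unset Printing Implicit Defensive.

(* Orienting every edge towards the first root turns a tree into a parent function
   [p] with [p r1 = r1] from which every vertex reaches [r1]; depths become
   iteration counts. Let [d] be the depth of the last common ancestor of [r2] and
   [r3]. The two root paths then form a spine of [k = i + j - d + 1] distinct
   vertices whose shape depends only on [i], [j] and [d], and the rest of [p] is a
   functional forest on the other [n - k] vertices with roots in the spine.
   There are [n ^_ k] labellings of the spine and, by the generalized Cayley
   formula, [k * n ^ (n - k - 1)] such forests (one if [k = n]); note that
   [k * n! / (n - k)! * n ^ (n - k - 1)] is exactly the [d]-th summand. *)

Lemma eq_set2 (T : finType) (x y a b : T) : a != b ->
  ([set x; y] == [set a; b]) = (x == a) && (y == b) || (x == b) && (y == a).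
Proof.
move=> ab; apply/eqP/idP => [xy_ab|]; last first.
  by case/orP => /andP[/eqP-> /eqP->] //; exact: setUC.
have: [/\ x \in [set a; b], y \in [set a; b], a \in [set x; y] & b \in [set x; y]].
  by rewrite xy_ab !set21 !set22 -xy_ab set21 set22.
case; rewrite !in_set2.
case/orP => /eqP ->; case/orP => /eqP ->; rewrite ?eqxx //= ?orbb ?orbT ?andbT //.
  by move=> _ /eqP ba; rewrite ba eqxx in ab.
by move=> /eqP ab'; rewrite ab' eqxx in ab.
Qed.

Lemma adj_sym m (E : {set {set 'I_m}}) : symmetric (adj E).
Proof. by move=> x y; rewrite /adj setUC. Qed.

Lemma seq_argmax (T : eqType) (f : T -> nat) (s : seq T) : s != [::] ->
  exists2 x, x \in s & forall z, z \in s -> f z <= f x.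
Proof.
elim: s => // a s IH _; case: s IH => [|b s] IH.
  by exists a; [exact: mem_head | move=> z; rewrite mem_seq1 => /eqP->].
have [x xs Hx] := IH isT; case: (leqP (f a) (f x)) => fax.
  exists x; first by rewrite inE xs orbT.
  by move=> z; rewrite inE => /orP[/eqP->//|]; apply: Hx.
exists a; first exact: mem_head.
by move=> z; rewrite inE => /orP[/eqP->//|/Hx]; lia.
Qed.

Section ParentFunctions.
Variable n : nat.
Implicit Types (p : {ffun 'I_n -> 'I_n}) (r v x y : 'I_n).

(* A tree rooted at [r] is encoded by the map sending each vertex to its
   neighbour towards [r] (and [r] to itself). *)
Definition rooted p r := p r = r /\ forall v, exists k, iter k p v = r.

Definition is_depth p r v a := iter a p v = r /\ forall b, b < a -> iter b p v <> r.

Lemma is_depth_uniq p r v a b : is_depth p r v a -> is_depth p r v b -> a = b.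
Proof.
move=> [Ha Ha'] [Hb Hb']; case: (ltngtP a b) => // ab.
- by case: (Hb' _ ab).
- by case: (Ha' _ ab).
Qed.

Lemma is_depth0 p r v : is_depth p r v 0 <-> v = r.
Proof. by split=> [[]//|->]; split. Qed.

Lemma is_depth_parent p r v a : v != r -> is_depth p r v a -> is_depth p r (p v) a.-1.
Proof.
move=> vr [H1 H2]; case: a H1 H2 => [|a] H1 H2 /=; first by move: vr; rewrite -H1 eqxx.
split; first by rewrite -iterSr.
by move=> b Hb; rewrite -iterSr; apply: H2.
Qed.

Lemma is_depth_child p r v a : v != r -> is_depth p r (p v) a -> is_depth p r v a.+1.
Proof.
move=> vr [H1 H2]; split; first by rewrite iterSr.
case=> [|b] Hb /=; first by move/eqP: vr.
by rewrite -iterS iterSr; apply: H2.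
Qed.

Lemma is_depth_iter p r v c a :
  is_depth p r v c -> a <= c -> is_depth p r (iter a p v) (c - a).
Proof.
move=> [H1 H2] ac; split; first by rewrite -iterD subnK.
by move=> b Hb; rewrite -iterD; apply: H2; lia.
Qed.

Definition depth p r v : nat :=
  match pselect (exists k, iter k p v == r) with
  | left ex => ex_minn ex | right _ => 0 end.

Lemma depthP p r v : (exists k, iter k p v = r) -> is_depth p r v (depth p r v).
Proof.
move=> [k Hk]; rewrite /depth; case: pselect => [ex|]; last by case; exists k; apply/eqP.
case: ex_minnP => m /eqP Hm Hmin; split => // b Hb /eqP/Hmin.
by rewrite leqNgt Hb.
Qed.

Section Rooted.
Variables (p : {ffun 'I_n -> 'I_n}) (r : 'I_n).
Hypothesis rp : rooted p r.
Local Notation depth := (depth p r).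

Lemma depth_is_depth v : is_depth p r v (depth v).
Proof. by case: rp => _ /(_ v) /depthP. Qed.

Lemma is_depthE v a : is_depth p r v a -> depth v = a.
Proof. exact: is_depth_uniq (depth_is_depth v). Qed.

Lemma depth_root : depth r = 0.
Proof. by apply: is_depthE; split. Qed.

Lemma depth_eq0 v : depth v = 0 -> v = r.
Proof. by move=> d0; have := depth_is_depth v; rewrite d0 => /is_depth0. Qed.

Lemma depthS v : v != r -> depth v = (depth (p v)).+1.
Proof. by move=> vr; apply/is_depthE/is_depth_child/depth_is_depth. Qed.

Lemma parent_neq v : v != r -> p v != v.
Proof. by move=> vr; apply/eqP => pv; have := depthS vr; rewrite pv; lia. Qed.

Definition parent_edges : {set {set 'I_n}} := [set [set v; p v] | v in [set v | v != r]].

Lemma adj_parent_edges x y :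
  adj parent_edges x y = (x != r) && (y == p x) || (y != r) && (x == p y).
Proof.
apply/imsetP/idP => [[v]|].
  rewrite inE => vr /eqP; rewrite eq_set2; last by rewrite eq_sym parent_neq.
  by case/orP => /andP[/eqP-> /eqP->]; rewrite vr eqxx ?orbT.
case/orP => /andP[xr /eqP ->]; first by exists x; rewrite ?inE.
by exists y; rewrite ?inE // setUC.
Qed.

Lemma adj_parent_edges_deeper u w : adj parent_edges u w -> depth w <= depth u -> w = p u.
Proof.
rewrite adj_parent_edges => /orP[/andP[_ /eqP]//|/andP[wr /eqP ->]].
by rewrite (depthS wr); lia.
Qed.

Lemma connect_parent_edges_root x : connect (adj parent_edges) x r.
Proof.
move Hm: (depth x) => m; elim: m x Hm => [|m IH] x Hm; first by rewrite (depth_eq0 Hm).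
have xr : x != r by apply: contra_eqN Hm => /eqP->; rewrite depth_root.
apply: connect_trans (connect1 _) (IH (p x) _); first by rewrite adj_parent_edges xr eqxx.
by move: Hm; rewrite (depthS xr); case.
Qed.

Lemma parent_edges_connected : connected parent_edges.
Proof.
move=> x y; apply: connect_trans (connect_parent_edges_root x) _.
by rewrite (sym_connect_sym (@adj_sym _ _)); exact: connect_parent_edges_root.
Qed.

Lemma parent_edges_simple : simple_graph parent_edges.
Proof. by move=> e /imsetP[v]; rewrite inE => vr ->; rewrite cards2 eq_sym parent_neq. Qed.

(* Both cycle neighbours of a deepest vertex of the cycle are its parent. *)
Lemma parent_edges_acyclic : acyclic parent_edges.
Proof.
move=> c Uc Sc; apply/negP => Cc.
have [x xc Hx] := seq_argmax depth (ltac:(by case: c Sc {Uc Cc}) : c != [::]).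
case: (rot_to xc) => k s' c_rot.
have Cs : cycle (adj parent_edges) (x :: s') by rewrite -c_rot rot_cycle.
have Us : uniq (x :: s') by rewrite -c_rot rot_uniq.
have Ss : 3 <= size (x :: s') by rewrite -c_rot size_rot.
have Hs z : z \in x :: s' -> depth z <= depth x by rewrite -c_rot mem_rot; apply: Hx.
case: s' Cs Us Ss Hs {c_rot} => [|y1 [|y2 s]] //= Cs Us _ Hs.
move/and3P: Cs => [e1 _]; rewrite rcons_path adj_sym => /andP[_ e2].
have h1 : y1 = p x by apply: adj_parent_edges_deeper e1 (Hs _ _); rewrite !inE eqxx orbT.
have h2 : last y2 s = p x.
  apply: adj_parent_edges_deeper e2 (Hs _ _).
  by have := mem_last y2 s; rewrite !inE => ->; rewrite !orbT.
by move/and4P: Us => [_ /negP []]; rewrite h1 -h2 mem_last.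
Qed.

Lemma depth_last_path q a : path (adj parent_edges) a q -> uniq (a :: q) -> p a \notin q ->
  depth (last a q) = depth a + size q.
Proof.
elim: q a => [|x1 q IH] a /=; first by rewrite addn0.
move=> /andP[ax1 x1q] /andP[aq Uq] paq.
have x1pa : x1 != p a by apply: contra paq => /eqP->; exact: mem_head.
move: ax1; rewrite adj_parent_edges (negbTE x1pa) andbF /= => /andP[x1r /eqP apx].
rewrite (IH x1 x1q Uq); last by rewrite -apx; apply: contra aq => aq; rewrite inE aq orbT.
by rewrite apx (depthS x1r) addSn addnS.
Qed.

Lemma is_depth_path d v : is_depth p r v d -> exists q,
  [/\ path (adj parent_edges) r q, last r q = v, uniq (r :: q), size q = d &
      forall z, z \in r :: q -> depth z <= d].
Proof.
elim: d v => [|d IH] v Hv.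
  move/is_depth0: Hv => ->; exists [::]; split => // z; rewrite mem_seq1 => /eqP->.
  by rewrite depth_root.
have vr : v != r by apply/eqP => vr; case: Hv => _ /(_ 0 isT); rewrite vr.
have /IH[q [Hp Hl Hu Hs Hz]] := is_depth_parent vr Hv.
have Dv : depth v = d.+1 by apply: is_depthE.
exists (rcons q v); split.
- by rewrite rcons_path Hp Hl adj_parent_edges vr eqxx orbT.
- by rewrite last_rcons.
- by rewrite -rcons_cons rcons_uniq Hu andbT; apply/negP => /Hz; rewrite Dv; lia.
- by rewrite size_rcons Hs.
- by move=> z; rewrite -rcons_cons mem_rcons inE => /orP[/eqP->|/Hz]; rewrite ?Dv //; lia.
Qed.

Lemma has_depth_parent_edges v d : has_depth parent_edges r v d <-> is_depth p r v d.
Proof.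
split; last by move/is_depth_path => [q [Hp Hl Hu Hs _]]; exists q.
case=> q [Hp Hl Hu Hs].
have prq : p r \notin q by case: rp => -> _; case/andP: Hu.
have := depth_last_path Hp Hu prq; rewrite Hl depth_root add0n Hs => <-.
exact: depth_is_depth.
Qed.

End Rooted.

Lemma parent_edges_inj p p' r : rooted p r -> rooted p' r ->
  parent_edges p r = parent_edges p' r -> p = p'.
Proof.
move=> rp rp' E; apply/ffunP => v.
case: (v =P r) => [->|/eqP vr]; first by rewrite (proj1 rp) (proj1 rp').
have same_depth x : depth p r x = depth p' r x.
  apply/esym/(is_depthE rp')/(has_depth_parent_edges rp'); rewrite -E.
  exact/(has_depth_parent_edges rp)/depth_is_depth.
have : adj (parent_edges p' r) v (p v) by rewrite -E adj_parent_edges // vr eqxx.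
rewrite adj_parent_edges // => /orP[/andP[_ /eqP ->]//|/andP[pvr /eqP pv]].
by have := depthS rp vr; have := depthS rp' pvr; rewrite -pv !same_depth; lia.
Qed.

Lemma parent_edges_subtree p r (E : {set {set 'I_n}}) : rooted p r ->
  simple_graph E -> acyclic E -> (forall v, v != r -> adj E v (p v)) ->
  parent_edges p r = E.
Proof.
move=> rp Es Ea Ep.
have sub a b : adj (parent_edges p r) a b -> adj E a b.
  by rewrite (adj_parent_edges rp) => /orP[]/andP[ar /eqP ->]; rewrite 1?[adj E _ b]adj_sym;
    apply: Ep.
apply/setP => e; apply/idP/idP.
  by case/imsetP => v; rewrite inE => vr ->; apply: sub; rewrite (adj_parent_edges rp) vr eqxx.
move=> eE; have /cards2P [x [y [xy ee]]] := introT eqP (Es e eE); subst e.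
case xy_par: (adj (parent_edges p r) x y) => //; exfalso.
have /connectP [q0 Hq0 Hy] := parent_edges_connected rp x y; subst y.
case: (shortenP Hq0) xy xy_par eE => q Hq Uq _ xy xy_par eE.
case: q Hq Uq xy xy_par eE => [|z [|z2 q]] Hq Uq xy xy_par eE.
- by rewrite eqxx in xy.
- by move: Hq => /= /andP[xz _]; rewrite xz in xy_par.
have := Ea _ Uq isT; rewrite /cycle rcons_path (sub_path sub Hq) /= adj_sym.
by rewrite /adj eE.
Qed.

Lemma shortest_walks (E : {set {set 'I_n}}) r : connected E ->
  exists dist : 'I_n -> nat, forall v,
    (exists q, [/\ path (adj E) r q, last r q = v & size q = dist v]) /\
    (forall q, path (adj E) r q -> last r q = v -> dist v <= size q).
Proof.
move=> Ec; apply: (fin_all_exists (P := fun v m =>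
  (exists q, [/\ path (adj E) r q, last r q = v & size q = m]) /\
  (forall q, path (adj E) r q -> last r q = v -> m <= size q))) => v.
have walk_len : exists m, `[< exists q, [/\ path (adj E) r q, last r q = v & size q = m] >].
  by have /connectP [q Hq ->] := Ec r v; exists (size q); apply/asboolP; exists q.
case: (ex_minnP walk_len) => m /asboolP Hm Hmin; exists m; split => // q Hq Hl.
by apply: Hmin; apply/asboolP; exists q.
Qed.

(* The parent of [v] is the penultimate vertex of a shortest walk from [r] to [v]. *)
Lemma connected_parent_function (E : {set {set 'I_n}}) r : connected E ->
  exists p, rooted p r /\ forall v, v != r -> adj E v (p v).
Proof.
move=> /(shortest_walks r) [dist Hdist].
have dist_root : dist r = 0 by apply/eqP; rewrite -leqn0; apply: (proj2 (Hdist r) [::]).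
have dist_eq0 v : dist v = 0 -> v = r.
  have [[q [_ Hl Hsz]] _] := Hdist v.
  by move=> d0; move: Hsz; rewrite d0; case: q Hl => // Hl _; rewrite -Hl.
have step v : exists u, v != r -> adj E v u /\ (dist u).+1 = dist v.
  case: (v =P r) => [_|/eqP vr]; first by exists r.
  have [[q [Hq Hl Hsz]] _] := Hdist v.
  case/lastP: q Hq Hl Hsz => [_ /= rv|q z]; first by rewrite rv eqxx in vr.
  rewrite rcons_path last_rcons size_rcons => /andP[Hq qz] zv Hsz.
  exists (last r q) => _; split; first by rewrite adj_sym -zv.
  have dist_le := proj2 (Hdist (last r q)) q Hq erefl.
  have [[q' [Hq' Hl' Hsz']] _] := Hdist (last r q).
  have : dist v <= size (rcons q' v).
    by apply: (proj2 (Hdist v)); rewrite ?last_rcons // rcons_path Hq' Hl' -zv.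
  by rewrite size_rcons Hsz'; lia.
have [pf Hpf] := fin_all_exists step.
pose p := [ffun v => if v == r then r else pf v].
have pv v : v != r -> p v = pf v by move=> vr; rewrite ffunE (negbTE vr).
exists p; split; last by move=> v vr; rewrite pv //; case: (Hpf v vr).
split => [|v]; first by rewrite ffunE eqxx.
exists (dist v); move Hm: (dist v) => m; elim: m v Hm => [|m IH] v Hm; first exact: dist_eq0.
have vr : v != r by apply: contra_eqN Hm => /eqP->; rewrite dist_root.
by rewrite iterSr; apply: IH; rewrite pv //; case: (Hpf v vr) => _; rewrite Hm; case.
Qed.

Lemma parent_edges_surj (E : {set {set 'I_n}}) r : is_tree E ->
  exists p, rooted p r /\ parent_edges p r = E.
Proof.
case=> Es Ec Ea; have [p [rp Ep]] := connected_parent_function r Ec.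
by exists p; split; last exact: parent_edges_subtree.
Qed.

Definition Wpar i j : {set {ffun 'I_n -> 'I_n} * 'I_n * 'I_n * 'I_n} :=
  [set y | `[< rooted y.1.1.1 y.1.1.2 /\ is_depth y.1.1.1 y.1.1.2 y.1.2 i /\
               is_depth y.1.1.1 y.1.1.2 y.2 j >] ].

Definition tree_of (y : {ffun 'I_n -> 'I_n} * 'I_n * 'I_n * 'I_n) :=
  (parent_edges y.1.1.1 y.1.1.2, y.1.1.2, y.1.2, y.2).

Lemma W_tree_of i j : W n i j = tree_of @: Wpar i j.
Proof.
apply/setP => [[[[E r1] r2] r3]]; rewrite inE /=; apply/asboolP/imsetP.
  case=> Et [H2 H3]; have [p [rp pE]] := parent_edges_surj r1 Et.
  exists (p, r1, r2, r3); last by rewrite /tree_of /= pE.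
  by rewrite inE; apply/asboolP; split=> //; split; apply/(has_depth_parent_edges rp); rewrite pE.
case=> [[[[p r1'] r2'] r3']]; rewrite inE => /asboolP /= [rp [H2 H3]] [-> -> -> ->].
split; first by split; [exact: parent_edges_simple | exact: parent_edges_connected
                       | exact: parent_edges_acyclic].
by split; apply/(has_depth_parent_edges rp).
Qed.

Lemma card_W_Wpar i j : #|W n i j| = #|Wpar i j|.
Proof.
rewrite W_tree_of; apply: card_in_imset => [[[[p r1] r2] r3]] [[[[p' r1'] r2'] r3']].
rewrite !inE => /asboolP[/= rp _] /asboolP[/= rp' _] [E r1E <- <-]; subst r1'.
by rewrite (parent_edges_inj rp rp' E).
Qed.

End ParentFunctions.

Lemma card_sum_fibers (T U : finType) (X : {set T}) (P : {set U}) (f : T -> U) :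
  {in X, forall x, f x \in P} -> #|X| = \sum_(u in P) #|[set x in X | f x == u]|.
Proof.
move=> fXP; rewrite -sum1_card (partition_big f (mem P)) //=.
by apply: eq_bigr => u _; rewrite -sum1_card; apply: eq_bigl => x; rewrite inE.
Qed.

Lemma sum_powerset_card (T : finType) (A : {set T}) (G : nat -> nat) :
  \sum_(B in powerset A) G #|B| = \sum_(t < #|A|.+1) 'C(#|A|, t) * G t.
Proof.
rewrite (partition_big (fun B : {set T} => inord #|B| : 'I_#|A|.+1) predT) //=.
have cardBA B : B \in powerset A -> #|B| < #|A|.+1.
  by rewrite powersetE ltnS; apply: subset_leq_card.
apply: eq_bigr => t _; rewrite (eq_bigr (fun _ => G t)); last first.
  by move=> B /andP[/cardBA /inordK Bt /eqP tB]; rewrite -tB Bt.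
rewrite -cards_draws -sum_nat_const; apply: eq_bigl => B; rewrite !inE -powersetE.
case/boolP: (B \in powerset A) => //= /cardBA Bt; apply/eqP/eqP => [<-|tB].
  by rewrite inordK.
by apply: val_inj; rewrite /= inordK.
Qed.

(* Generalized Cayley formula: the number of functional forests on [a] vertices
   whose roots lie in a fixed disjoint set of [s] vertices. *)
Definition forest_count (a s : nat) := if a == 0 then 1 else s * (a + s) ^ a.-1.

Lemma forest_count_rec (a s : nat) : 0 < a ->
  \sum_(t < a.+1) 'C(a, t) * (if t == 0 :> nat then 0 else s ^ t * forest_count (a - t) t) =
  forest_count a s.
Proof.
(* Expand [(a.+1 + s) ^ a] binomially and use [t.+1 * 'C(a.+1, t.+1) = a.+1 * 'C(a, t)]. *)
case: a => // a _; rewrite big_ord_recl /= muln0 add0n /forest_count /= expnDn big_distrr.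
apply: eq_bigr => [[t /= ltta]] _.
rewrite /bump /= add1n subSS addnS subnK; last by rewrite -ltnS.
have := mul_bin_diag a.+1 t; rewrite /= => bin_diag.
case: (ltngtP t a) => [lt| |->]; last by rewrite subnn eqxx !binn expnS; ring.
- have ta : a - t != 0 by rewrite subn_eq0 -ltnNge.
  rewrite (negbTE ta) -[a - t]prednK ?lt0n // !expnS.
  transitivity (s * s ^ t * (a.+1 ^ (a - t).-1) * (t.+1 * 'C(a.+1, t.+1))); first by ring.
  by rewrite -bin_diag; ring.
- by move: ltta; rewrite ltnS leqNgt => /negbTE ->.
Qed.

Section Forests.
Variable n : nat.
Implicit Types (A S T : {set 'I_n}) (g h : {ffun 'I_n -> 'I_n}).

Definition forest_into A S g :=
  [/\ forall v, v \notin A -> g v = v,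
      forall v, v \in A -> g v \in A :|: S &
      forall v, v \in A -> exists k, iter k g v \in S].

Definition forests A S : {set {ffun 'I_n -> 'I_n}} := [set g | `[< forest_into A S g >] ].

Lemma forestsP A S g : reflect (forest_into A S g) (g \in forests A S).
Proof. by rewrite inE; apply: asboolP. Qed.

Definition roots_preimage A S g := [set v in A | g v \in S].

Definition maps_into T S : {set {ffun 'I_n -> 'I_n}} :=
  [set h : {ffun 'I_n -> 'I_n} | [forall v, if v \in T then h v \in S else h v == v]].

Lemma card_maps_into T S : #|maps_into T S| = #|S| ^ #|T|.
Proof.
pose F v := if v \in T then mem S else mem (pred1 v).
have -> : #|maps_into T S| = #|(family F : simpl_pred {ffun 'I_n -> 'I_n})|.
  apply: eq_card => h; rewrite inE; apply/forallP/familyP => H v; have := H v;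
  by rewrite /F; case: (v \in T).
rewrite card_family foldrE big_map big_enum /= -prod_nat_const [RHS]big_mkcond /=.
by apply: eq_bigr => v _; rewrite /F; case: (v \in T) => //; rewrite card1.
Qed.

Definition merge T (h g : {ffun 'I_n -> 'I_n}) : {ffun 'I_n -> 'I_n} :=
  [ffun v => if v \in T then h v else g v].

Section Fiber.
Variables A S T : {set 'I_n}.
Hypotheses (AS : [disjoint A & S]) (TA : T \subset A).

Lemma merge_forest h g : h \in maps_into T S -> g \in forests (A :\: T) T ->
  merge T h g \in forests A S /\ roots_preimage A S (merge T h g) = T.
Proof.
rewrite inE => /forallP hTS /forestsP [g1 g2 g3].
have mT v : v \in T -> merge T h g v \in S by move=> vT; have := hTS v; rewrite vT ffunE vT.
have mN v : v \notin T -> merge T h g v = g v by move=> vT; rewrite ffunE (negbTE vT).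
have gA v : v \in A -> v \notin T -> g v \in A.
  move=> vA vT; have := g2 v; rewrite !inE vT vA => /(_ isT) /orP[/andP[]//|].
  exact: (subsetP TA).
split.
  apply/forestsP; split.
  - move=> v vA; have vT : v \notin T by apply: contra vA; apply/subsetP.
    by rewrite mN // g1 // inE negb_and vA orbT.
  - move=> v vA; rewrite inE; case/boolP: (v \in T) => vT; first by rewrite mT ?orbT.
    by rewrite mN // gA.
  - move=> v vA; case/boolP: (v \in T) => vT; first by exists 1; rewrite /= mT.
    have [k] := g3 v (ltac:(by rewrite inE vT vA) : v \in A :\: T).
    elim: k v vT {vA} => [|k IH] v vT; first by rewrite /= (negbTE vT).
    rewrite iterSr => /IH; case/boolP: (g v \in T) => [gvT _|_ /(_ isT) [m Hm]].
      by exists 2; rewrite /= (mN v) // mT.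
    by exists m.+1; rewrite iterSr mN.
apply/setP => v; rewrite inE; case/boolP: (v \in T) => vT; first by rewrite mT // (subsetP TA).
by case/boolP: (v \in A) => //= vA; rewrite mN // (disjointFr AS) // gA.
Qed.

Lemma split_forest g : g \in forests A S -> roots_preimage A S g = T ->
  exists2 x, x \in setX (maps_into T S) (forests (A :\: T) T) & g = merge T x.1 x.2.
Proof.
move=> /forestsP [g1 g2 g3] gT.
exists ([ffun v => if v \in T then g v else v], [ffun v => if v \in T then v else g v]);
  last by apply/ffunP => v; rewrite !ffunE /=; case: (v \in T).
have inT v : (v \in T) = (v \in A) && (g v \in S) by rewrite -gT inE.
have gA v : v \in A -> v \notin T -> g v \in A.
  move=> vA vT; have := g2 v vA; rewrite inE => /orP[//|gS].
  by move: vT; rewrite inT vA gS.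
rewrite in_setX; apply/andP; split.
  rewrite inE; apply/forallP => v; rewrite !ffunE; case vT: (v \in T) => //.
  by move: vT; rewrite inT => /andP[].
apply/forestsP; split.
- move=> v; rewrite inE negb_and negbK ffunE; case: (v \in T) => //= vA; exact: g1.
- move=> v; rewrite inE ffunE => /andP[vT vA]; rewrite (negbTE vT).
  by rewrite !inE gA // orbC; case: (g v \in T).
- move=> v; rewrite inE => /andP[_ vA]; have [k] := g3 v vA.
  elim: k v vA => [|k IH] v vA; first by rewrite /= (disjointFr AS vA).
  case/boolP: (v \in T) => vT; first by exists 0.
  rewrite iterSr => /(IH _ (gA v vA vT)) [m Hm].
  by exists m.+1; rewrite iterSr ffunE (negbTE vT).
Qed.

Lemma card_forests_fiber :
  #|[set g in forests A S | roots_preimage A S g == T]| = #|S| ^ #|T| * #|forests (A :\: T) T|.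
Proof.
have -> : [set g in forests A S | roots_preimage A S g == T] =
          [set merge T x.1 x.2 | x in setX (maps_into T S) (forests (A :\: T) T)].
  apply/setP => g; rewrite inE; apply/andP/imsetP => [[gF /eqP gT]|[[h g'] /=]].
    exact: split_forest gF gT.
  by rewrite inE => /andP[hT g'F] ->; have [-> ->] := merge_forest hT g'F.
rewrite card_in_imset ?cardsX ?card_maps_into //.
move=> [h1 g1] [h2 g2]; rewrite !in_setX !inE /=.
move=> /andP[/forallP F1 /asboolP[a1 _ _]] /andP[/forallP F2 /asboolP[b1 _ _]] /ffunP E.
congr pair; apply/ffunP => v; have := E v; rewrite !ffunE /=; case vT: (v \in T) => Ev //.
- by have := F1 v; have := F2 v; rewrite vT => /eqP-> /eqP->.
- by rewrite a1 ?b1 // inE vT.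
Qed.

End Fiber.

Lemma forests_no_root_edge A S : [disjoint A & S] -> A != set0 ->
  [set g in forests A S | roots_preimage A S g == set0] = set0.
Proof.
move=> AS /set0Pn [v0 v0A]; apply/setP => g; rewrite in_set0 inE.
apply/negP => /andP[/forestsP [g1 g2 g3] /eqP gT].
have stays k v : v \in A -> iter k g v \in A.
  elim: k v => [//|k IH] v vA; rewrite iterSr; apply: IH.
  have := g2 v vA; rewrite inE => /orP[//|gS].
  have : v \in roots_preimage A S g by rewrite inE vA gS.
  by rewrite gT inE.
have [k /(disjointFl AS)] := g3 v0 v0A.
by rewrite stays.
Qed.

Lemma forests_set0 S : forests set0 S = [set [ffun v => v]].
Proof.
apply/setP => g; rewrite in_set1; apply/forestsP/eqP => [[g1 _ _]|->].
  by apply/ffunP => v; rewrite ffunE g1 // inE.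
by split => v; rewrite ?inE // ffunE.
Qed.

(* Induction on [#|A|], classifying forests by the set [T] of vertices attached
   directly to [S]: removing [T] leaves a forest on [A :\: T] rooted in [T]. *)
Lemma card_forests A S : [disjoint A & S] -> #|forests A S| = forest_count #|A| #|S|.
Proof.
move Hm: #|A| => m; elim/ltn_ind: m A S Hm => m IH A S Hm AS.
have [m0|m_gt0] := posnP m.
  by move: Hm; rewrite m0 => /cards0_eq ->; rewrite forests_set0 cards1.
rewrite (card_sum_fibers (f := roots_preimage A S) (P := powerset A)); last first.
  by move=> g _; rewrite powersetE; apply/subsetP => v; rewrite inE => /andP[].
pose G t := if t == 0 then 0 else #|S| ^ t * forest_count (m - t) t.
rewrite (eq_bigr (fun T => G #|T|)); first by rewrite sum_powerset_card Hm forest_count_rec.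
move=> T; rewrite powersetE => TA; rewrite /G.
have [->|T0] := eqVneq T set0.
  by rewrite forests_no_root_edge ?cards0 // -card_gt0 Hm.
have t_gt0 : 0 < #|T| by rewrite card_gt0.
rewrite card_forests_fiber // (IH (m - #|T|)).
- by rewrite ifN // -lt0n.
- by move: t_gt0; rewrite -Hm; lia.
- by rewrite cardsDS // Hm.
- by rewrite disjoints_subset subsetDr.
Qed.

End Forests.

Definition max_cond N (P : pred nat) := \max_(m < N | P m) m.

Lemma max_cond_lt N (P : pred nat) : 0 < N -> max_cond N P < N.
Proof. by case: N => // N _; rewrite ltnS; apply/bigmax_leqP => m _; rewrite -ltnS. Qed.

Lemma max_condP N (P : pred nat) : 0 < N -> P 0 -> P (max_cond N P).
Proof. by case: N => // N _ P0; rewrite /max_cond (bigmax_eq_arg ord0) //; case: arg_maxnP. Qed.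

Lemma max_cond_ub N (P : pred nat) m : m < N -> P m -> m <= max_cond N P.
Proof.
move=> mN Pm.
exact: (leq_bigmax_cond (P := fun m : 'I_N => P m) (F := fun m : 'I_N => nat_of_ord m)
                        (Ordinal mN)).
Qed.

Lemma max_cond_succ N (P : pred nat) : (max_cond N P).+1 < N -> ~~ P (max_cond N P).+1.
Proof. by move=> lt; apply/negP => /(max_cond_ub lt); rewrite ltnn. Qed.

Lemma max_condE N (P : pred nat) d : d < N -> P d -> (d.+1 < N -> ~~ P d.+1) ->
  (forall m m', m' <= m -> m < N -> P m -> P m') -> max_cond N P = d.
Proof.
move=> dN Pd Pd1 P_down; apply/eqP; rewrite eqn_leq max_cond_ub // andbT.
apply/bigmax_leqP => m Pm; rewrite leqNgt; apply/negP => dm.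
have d1N : d.+1 < N by apply: leq_ltn_trans (ltn_ord m).
by move: (Pd1 d1N); rewrite (P_down m d.+1 dm (ltn_ord m) Pm).
Qed.

(* The spine: positions [0..i] form the path from the first root to the second
   one, and positions [i+1..i+j-d] the branch towards the third root, grafted
   below position [d]. *)
Section SpineShape.
Variables (i j d : nat).
Hypothesis dmin : d <= minn i j.

Definition spine_parent m := if m == i.+1 then d else m.-1.
Definition spine_depth m := if m <= i then m else m - i + d.
Definition spine_end := if j == d then d else i + j - d.

Lemma spine_parent_le m : spine_parent m <= m.
Proof. by rewrite /spine_parent; case: eqP => [->|_]; lia. Qed.

Lemma spine_depth_parent m : 0 < m -> spine_depth (spine_parent m) = (spine_depth m).-1.
Proof.
move: dmin; rewrite leq_min => /andP[di _] m_gt0; rewrite /spine_depth /spine_parent.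
case: eqP => [->|mi]; first by rewrite ltnn di; lia.
by case: (leqP m i) => mi'; [rewrite ifT | rewrite ifF]; lia.
Qed.

Lemma spine_depth_eq0 m : (spine_depth m == 0) = (m == 0).
Proof. by rewrite /spine_depth; case: leqP; lia. Qed.

Lemma spine_depth_iter a m : a <= spine_depth m ->
  spine_depth (iter a spine_parent m) = spine_depth m - a.
Proof.
elim: a => [|a IH] am /=; first by rewrite subn0.
have IHa := IH (ltnW am).
have pos : 0 < iter a spine_parent m by rewrite lt0n -spine_depth_eq0 IHa; lia.
by rewrite spine_depth_parent // IHa; lia.
Qed.

Lemma iter_spine_depth m : iter (spine_depth m) spine_parent m = 0.
Proof. by apply/eqP; rewrite -spine_depth_eq0 spine_depth_iter // subnn. Qed.

Lemma iter_spine_neq0 b m : b < spine_depth m -> iter b spine_parent m != 0.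
Proof. by move=> bm; rewrite -spine_depth_eq0 spine_depth_iter ?(ltnW bm) //; lia. Qed.

Lemma iter_spine_low a m : m <= i -> iter a spine_parent m = m - a.
Proof.
elim: a => [|a IH] mi /=; first by rewrite subn0.
by rewrite IH // /spine_parent; case: eqP; lia.
Qed.

Lemma iter_spine_high a m : i < m -> a <= m - i.+1 -> iter a spine_parent m = m - a.
Proof.
elim: a => [|a IH] im am /=; first by rewrite subn0.
by rewrite IH //; [rewrite /spine_parent; case: eqP | ]; lia.
Qed.

Lemma iter_spine_branch m : i < m -> iter (m - i) spine_parent m = d.
Proof.
move=> im; have -> : m - i = (m - i.+1).+1 by lia.
by rewrite iterS iter_spine_high // /spine_parent; case: eqP; lia.
Qed.

Lemma spine_depth_end : spine_depth spine_end = j.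
Proof.
move: dmin; rewrite leq_min => /andP[di dj].
rewrite /spine_depth /spine_end; case: eqP => [->|jd]; first by rewrite di.
by rewrite ifF; lia.
Qed.

Lemma iter_spine_end : iter (j - d) spine_parent spine_end = d.
Proof.
move: dmin; rewrite leq_min => /andP[di dj].
rewrite /spine_end; case: eqP => [->|jd]; first by rewrite subnn.
by rewrite (_ : j - d = i + j - d - i); [apply: iter_spine_branch|]; lia.
Qed.

End SpineShape.

Section Assemble.
Variables (n i j d : nat).
Hypothesis dmin : d <= minn i j.
Local Notation k := (i + j - d).+1.
Local Notation spine := {ffun 'I_k -> 'I_n}.
Local Notation pfun := {ffun 'I_n -> 'I_n}.
Implicit Types (t : spine) (g : pfun) (v : 'I_n).

Definition spine_parent_ord (m : 'I_k) : 'I_k := inord (spine_parent i d m).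

Lemma spine_parent_ordE m : spine_parent_ord m = spine_parent i d m :> nat.
Proof. by rewrite inordK // (leq_ltn_trans (spine_parent_le dmin _)). Qed.

Lemma iter_spine_parent_ord a m :
  iter a spine_parent_ord m = iter a (spine_parent i d) m :> nat.
Proof. by elim: a => //= a <-; rewrite spine_parent_ordE. Qed.

Lemma inord_i : (inord i : 'I_k) = i :> nat.
Proof. by rewrite inordK //; lia. Qed.

Lemma inord_spine_end : (inord (spine_end i j d) : 'I_k) = spine_end i j d :> nat.
Proof.
move: dmin; rewrite leq_min => /andP[di dj].
by rewrite inordK // /spine_end; case: eqP; lia.
Qed.

Definition spine_set t : {set 'I_n} := t @: [set: 'I_k].

Definition graft t g : pfun :=
  [ffun v => if [pick m | t m == v] is Some m then t (spine_parent_ord m) else g v].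

Lemma graft_spine t g m : injective t -> graft t g (t m) = t (spine_parent_ord m).
Proof.
move=> t_inj; rewrite ffunE; case: pickP => [m' /eqP /t_inj -> //|/(_ m)].
by rewrite eqxx.
Qed.

Lemma graft_out t g v : v \notin spine_set t -> graft t g v = g v.
Proof.
move=> vS; rewrite ffunE; case: pickP => // m /eqP tm.
by move: vS; rewrite -tm imset_f ?inE.
Qed.

Lemma iter_graft_spine t g a m : injective t ->
  iter a (graft t g) (t m) = t (iter a spine_parent_ord m).
Proof. by move=> t_inj; elim: a => //= a ->; rewrite graft_spine. Qed.

Lemma is_depth_graft_spine t g m : injective t ->
  is_depth (graft t g) (t ord0) (t m) (spine_depth i d m).
Proof.
move=> t_inj; split.
  rewrite iter_graft_spine //; congr (t _); apply: ord_inj.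
  by rewrite iter_spine_parent_ord /= (iter_spine_depth dmin).
move=> b bm; rewrite iter_graft_spine // => /t_inj /(congr1 (@nat_of_ord _)).
by rewrite iter_spine_parent_ord /=; apply/eqP; apply: iter_spine_neq0 dmin _ _ bm.
Qed.

Lemma graft_rooted t g : injective t -> g \in forests (~: spine_set t) (spine_set t) ->
  rooted (graft t g) (t ord0).
Proof.
move=> t_inj /forestsP [_ _ g3]; split.
  by rewrite graft_spine //; congr (t _); apply: ord_inj; rewrite spine_parent_ordE.
move=> v; suff [a /imsetP [m _ vm]] : exists a, iter a (graft t g) v \in spine_set t.
  exists (spine_depth i d m + a); rewrite iterD vm.
  by case: (is_depth_graft_spine g m t_inj).
case/boolP: (v \in spine_set t) => vS; first by exists 0.
have [a] := g3 v (ltac:(by rewrite inE) : v \in ~: spine_set t).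
elim: a v vS => [|a IH] v vS; first by rewrite /= (negbTE vS).
case/boolP: (g v \in spine_set t) => gvS; first by exists 1; rewrite /= graft_out.
by rewrite iterSr => /(IH _ gvS) [b Hb]; exists b.+1; rewrite iterSr graft_out.
Qed.

Definition meets (y : pfun * 'I_n * 'I_n * 'I_n) m :=
  iter (i - m) y.1.1.1 y.1.2 == iter (j - m) y.1.1.1 y.2.

(* The depth of the last common ancestor of the second and third roots. *)
Definition branch_depth y := max_cond (minn i j).+1 (meets y).

Lemma meets_down y m m' : m' <= m -> m < (minn i j).+1 -> meets y m -> meets y m'.
Proof.
move=> m'm mN /eqP meet; apply/eqP.
rewrite (_ : i - m' = (m - m') + (i - m)); last lia.
by rewrite (_ : j - m' = (m - m') + (j - m)); [rewrite !iterD meet | lia].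
Qed.

Definition spines_forests : {set spine * pfun} :=
  [set x : spine * pfun | injectiveb x.1 && (x.2 \in forests (~: spine_set x.1) (spine_set x.1))].

Definition assemble (x : spine * pfun) : pfun * 'I_n * 'I_n * 'I_n :=
  (graft x.1 x.2, x.1 ord0, x.1 (inord i), x.1 (inord (spine_end i j d))).

Definition Wpar_branch := [set y in Wpar n i j | branch_depth y == d].

Lemma assemble_in x : x \in spines_forests -> assemble x \in Wpar_branch.
Proof.
move: dmin; rewrite leq_min => /andP[di dj].
case: x => t g; rewrite inE /= => /andP[/injectiveP t_inj gF].
have dep m := is_depth_graft_spine g m t_inj.
rewrite !inE; apply/andP; split.
  apply/asboolP; split; first exact: graft_rooted.
  have := dep (inord i); have := dep (inord (spine_end i j d)).
  by rewrite inord_i inord_spine_end (spine_depth_end dmin) /spine_depth leqnn.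
apply/eqP; apply: max_condE; rewrite ?ltnS //.
- rewrite /meets /= !iter_graft_spine //; apply/eqP; congr (t _); apply: ord_inj.
  rewrite !iter_spine_parent_ord inord_i inord_spine_end (iter_spine_end dmin).
  by rewrite (iter_spine_low dmin) //; lia.
- move=> dN; rewrite /meets /= !iter_graft_spine // (inj_eq t_inj) -val_eqE /=.
  rewrite !iter_spine_parent_ord inord_i inord_spine_end.
  have jd : j != d by move: dN; rewrite leq_min; lia.
  by rewrite /spine_end (negbTE jd) (iter_spine_low dmin) // (iter_spine_high dmin) //; lia.
- by move=> m m' m'm mN; apply: meets_down.
Qed.

Definition spine_vertex (y : pfun * 'I_n * 'I_n * 'I_n) (m : nat) :=
  if m <= i then iter (i - m) y.1.1.1 y.1.2 else iter (i + j - d - m) y.1.1.1 y.2.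

Definition disassemble (y : pfun * 'I_n * 'I_n * 'I_n) : spine * pfun :=
  let t := [ffun m : 'I_k => spine_vertex y m] in
  (t, [ffun v => if v \in spine_set t then v else y.1.1.1 v]).

Lemma disassemble_assemble x : x \in spines_forests -> disassemble (assemble x) = x.
Proof.
move: dmin; rewrite leq_min => /andP[di dj].
case: x => t g; rewrite inE /= => /andP[/injectiveP t_inj /forestsP [g1 _ _]].
have spine_t : [ffun m : 'I_k => spine_vertex (assemble (t, g)) m] = t.
  apply/ffunP => m; rewrite ffunE /spine_vertex /=.
  case: leqP => mi; rewrite !iter_graft_spine //; congr (t _); apply: ord_inj;
    rewrite !iter_spine_parent_ord ?inord_i ?inord_spine_end.
    by rewrite (iter_spine_low dmin) //; lia.
  have jd : j != d by have := ltn_ord m; lia.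
  by have := ltn_ord m; rewrite /spine_end (negbTE jd) (iter_spine_high dmin) //; lia.
rewrite /disassemble spine_t; congr pair; apply/ffunP => v; rewrite ffunE.
case/boolP: (v \in spine_set t) => vS; last by rewrite graft_out.
by rewrite g1 // inE vS.
Qed.

Section Disassemble.
Variables (p : pfun) (r1 r2 r3 : 'I_n).
Hypotheses (rp : rooted p r1) (dep2 : is_depth p r1 r2 i) (dep3 : is_depth p r1 r3 j).
Hypothesis branch_d : branch_depth (p, r1, r2, r3) = d.
Local Notation y := (p, r1, r2, r3).

Lemma meets_branch : iter (i - d) p r2 = iter (j - d) p r3.
Proof.
have : meets y (branch_depth y).
  by apply: max_condP => //; rewrite /meets !subn0 (proj1 dep2) (proj1 dep3).
by rewrite branch_d => /eqP.
Qed.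

Lemma not_meets_above : d < minn i j -> ~~ meets y d.+1.
Proof.
move=> dij; have := @max_cond_succ (minn i j).+1 (meets y).
by rewrite -/(branch_depth y) branch_d; apply.
Qed.

Lemma spine_vertex_depth m : m < k -> is_depth p r1 (spine_vertex y m) (spine_depth i d m).
Proof.
move=> mk; rewrite /spine_vertex /spine_depth /=; case: leqP => mi.
  by have := is_depth_iter dep2 (leq_subr m i); rewrite subKn.
by rewrite (_ : m - i + d = j - (i + j - d - m)); [apply: is_depth_iter dep3 _|]; lia.
Qed.

(* A path vertex and a branch vertex at the same depth would make the two
   root paths meet strictly below depth [d]. *)
Lemma spine_vertex_inj m1 m2 : m1 < k -> m2 < k ->
  spine_vertex y m1 = spine_vertex y m2 -> m1 = m2.
Proof.
move: dmin; rewrite leq_min => /andP[di dj].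
have same_depth m m' : m < k -> m' < k -> spine_vertex y m = spine_vertex y m' ->
    spine_depth i d m = spine_depth i d m'.
  move=> mk m'k E; apply: is_depth_uniq (spine_vertex_depth mk) _.
  by rewrite E; apply: spine_vertex_depth.
have cross m m' : m < k -> m' < k -> m <= i -> i < m' -> spine_vertex y m <> spine_vertex y m'.
  move=> mk m'k mi im' E; have := same_depth _ _ mk m'k E.
  rewrite /spine_depth mi leqNgt im' /= => dep_eq.
  have meet_m : meets y m.
    move: E; rewrite /meets /spine_vertex /= mi leqNgt im' /= => ->.
    by rewrite (_ : i + j - d - m' = j - m) //; lia.
  have dij : d < minn i j by rewrite leq_min; lia.
  have := not_meets_above dij; rewrite (meets_down (m := m)) //; first lia.
  by rewrite ltnS leq_min; lia.
move=> m1k m2k E; have := same_depth _ _ m1k m2k E; rewrite /spine_depth.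
case: (leqP m1 i) => h1; case: (leqP m2 i) => h2 //; try lia.
- by case: (cross _ _ m1k m2k h1 h2 E).
- by case: (cross _ _ m2k m1k h2 h1 (esym E)).
Qed.

Lemma spine_vertex_parent m : m < k -> p (spine_vertex y m) = spine_vertex y (spine_parent i d m).
Proof.
move: dmin; rewrite leq_min => /andP[di dj] mk; rewrite /spine_vertex /spine_parent /=.
have [->|m_gt0] := posnP m; first by rewrite subn0 (proj1 dep2) (proj1 rp).
case: eqP mk => [->|mi1] mk.
  by rewrite ltnn di meets_branch (_ : j - d = (i + j - d - i.+1).+1) //; lia.
case: (leqP m i) => mi.
  by rewrite ifT; [rewrite (_ : i - m.-1 = (i - m).+1) // | ]; lia.
by rewrite ifF; [rewrite (_ : i + j - d - m.-1 = (i + j - d - m).+1) // | ]; lia.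
Qed.

Lemma spine_vertex_ends :
  [/\ spine_vertex y 0 = r1, spine_vertex y i = r2 & spine_vertex y (spine_end i j d) = r3].
Proof.
move: dmin; rewrite leq_min => /andP[di dj].
rewrite /spine_vertex /= subn0 leqnn subnn (proj1 dep2); split => //.
rewrite /spine_end; case: eqP => [jd|jd]; first by rewrite di meets_branch jd subnn.
by rewrite ifF ?subnn //; lia.
Qed.

End Disassemble.

Lemma Wpar_branchP y : y \in Wpar_branch ->
  [/\ rooted y.1.1.1 y.1.1.2, is_depth y.1.1.1 y.1.1.2 y.1.2 i,
      is_depth y.1.1.1 y.1.1.2 y.2 j & branch_depth y = d].
Proof. by rewrite !inE => /andP[/asboolP [rp [dep2 dep3]] /eqP]. Qed.

Lemma disassemble_spine_inj y : y \in Wpar_branch -> injective (disassemble y).1.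
Proof.
case: y => [[[p r1] r2] r3] /Wpar_branchP [rp dep2 dep3 bd] m1 m2.
by rewrite !ffunE => /(spine_vertex_inj dep2 dep3 bd (ltn_ord _) (ltn_ord _)) /ord_inj.
Qed.

Lemma disassemble_in y : y \in Wpar_branch -> disassemble y \in spines_forests.
Proof.
move=> yW; have t_inj := disassemble_spine_inj yW.
case: y yW t_inj => [[[p r1] r2] r3] /Wpar_branchP [/= rp dep2 dep3 bd] t_inj.
rewrite inE /=; set t := [ffun m : 'I_k => _] in t_inj *.
apply/andP; split; first exact/injectiveP.
apply/forestsP; split.
- by move=> v; rewrite inE negbK ffunE => ->.
- by move=> v _; rewrite !inE orNb.
- move=> v _; case: rp => _ /(_ v) [a].
  have [r1t _ _] := spine_vertex_ends dep2 dep3 bd.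
  have r1S : r1 \in spine_set t by apply/imsetP; exists ord0; rewrite ?inE // ffunE r1t.
  move=> av; rewrite -av in r1S; elim: a v {av} r1S => [|a IH] v vS; first by exists 0.
  case/boolP: (v \in spine_set t) => vS'; first by exists 0.
  have [b Hb] := IH _ (ltac:(by rewrite -iterSr) : iter a p (p v) \in spine_set t).
  by exists b.+1; rewrite iterSr ffunE (negbTE vS').
Qed.

Lemma assemble_disassemble y : y \in Wpar_branch -> assemble (disassemble y) = y.
Proof.
move=> yW; have t_inj := disassemble_spine_inj yW.
case: y yW t_inj => [[[p r1] r2] r3] /Wpar_branchP [/= rp dep2 dep3 bd] t_inj.
have [r1t r2t r3t] := spine_vertex_ends dep2 dep3 bd.
rewrite /assemble /= !ffunE inord_i inord_spine_end r1t r2t r3t; congr (_, _, _, _).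
set t := [ffun m : 'I_k => _] in t_inj *.
apply/ffunP => v; case/boolP: (v \in spine_set t) => vS.
  by case/imsetP: vS => m _ ->; rewrite graft_spine // !ffunE spine_parent_ordE spine_vertex_parent.
by rewrite graft_out // ffunE (negbTE vS).
Qed.

Lemma card_Wpar_branch : #|Wpar_branch| = #|spines_forests|.
Proof.
have -> : Wpar_branch = assemble @: spines_forests.
  apply/setP => y; apply/idP/imsetP => [yW|[x xF ->]]; last exact: assemble_in.
  by exists (disassemble y); [exact: disassemble_in | rewrite assemble_disassemble].
apply: card_in_imset => x1 x2 x1F x2F E.
by rewrite -(disassemble_assemble x1F) -(disassemble_assemble x2F) E.
Qed.

Lemma card_spines_forests : #|spines_forests| = n ^_ k * forest_count (n - k) k.
Proof.
rewrite (card_sum_fibers (f := fst) (P := [set t : spine | injectiveb t])); last first.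
  by case=> t g; rewrite !inE => /andP[].
rewrite (eq_bigr (fun _ => forest_count (n - k) k)).
  by rewrite sum_nat_const card_inj_ffuns !card_ord.
move=> t; rewrite inE => /injectiveP t_inj.
have -> : [set x in spines_forests | x.1 == t] =
          pair t @: forests (~: spine_set t) (spine_set t).
  apply/setP => [[t' g]]; rewrite inE /= inE /=.
  apply/andP/imsetP => [[/andP[_ gF] /eqP tt']|].
    by subst t'; exists g.
  by case=> g' gF [-> ->]; rewrite gF andbT; split=> //; apply/injectiveP.
rewrite card_imset; last by move=> g1 g2 [].
have card_spine : #|spine_set t| = k by rewrite card_imset // cardsT card_ord.
have card_rest : #|~: spine_set t| = n - k.
  by have := cardsC (spine_set t); rewrite card_spine card_ord; lia.
by rewrite card_forests ?disjoints_subset // card_rest card_spine.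
Qed.

End Assemble.

Lemma card_Wpar_branches n i j :
  #|Wpar n i j| = \sum_(d < (minn i j).+1) #|Wpar_branch n i j d|.
Proof.
rewrite (card_sum_fibers (f := fun y => inord (branch_depth i j y) : 'I_(minn i j).+1)
                         (P := setT)) //.
apply: eq_big => [d|d _]; first by rewrite inE.
apply: eq_card => y; rewrite !inE; congr (_ && _).
have bl : branch_depth i j y < (minn i j).+1 by apply: max_cond_lt.
by apply/eqP/eqP => [<-|bd]; [rewrite inordK | apply: ord_inj; rewrite inordK // bd].
Qed.

Lemma card_W_nat n i j : #|W n i j| =
  \sum_(d < (minn i j).+1)
    n ^_ (i + j - d).+1 * forest_count (n - (i + j - d).+1) (i + j - d).+1.
Proof.
rewrite card_W_Wpar card_Wpar_branches; apply: eq_bigr => d _.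
have dmin : d <= minn i j by rewrite -ltnS.
by rewrite (card_Wpar_branch n dmin) (card_spines_forests n dmin).
Qed.

Local Open Scope ring_scope.
Import GRing.Theory Num.Theory.

Lemma W_formula_summandE (n k : nat) (m : int) : (0 < n)%N -> m = n%:Z - k%:Z ->
  k%:R * n`!%:R * inv_fact m * n%:R ^ (m - 1) = (n ^_ k * forest_count (n - k) k)%:R :> rat.
Proof.
move=> n_gt0 ->; case: (leqP k n) => kn; last first.
  by rewrite ffact_small // (_ : n%:Z - k%:Z = Negz (k - n).-1) /= ?mulr0 ?mul0r //; lia.
have -> : n%:Z - k%:Z = (n - k)%N%:Z by lia.
have nf : n`!%:R = (n ^_ k)%:R * (n - k)`!%:R :> rat by rewrite -natrM ffact_fact.
have f0 : (n - k)`!%:R != 0 :> rat by rewrite pnatr_eq0 -lt0n fact_gt0.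
rewrite /= /forest_count nf; case: eqP => nk.
  have n0 : n%:R != 0 :> rat by rewrite pnatr_eq0 -lt0n.
  have kn' : k = n by lia.
  by rewrite nk /= exprN1 muln1 fact0 kn'; field.
rewrite (_ : (n - k)%N%:Z - 1 = (n - k).-1%:Z); last by lia.
by rewrite -exprnP subnK // natrM natrM natrX; field.
Qed.

Theorem theorem3 (n i j : nat) : (1 <= n)%N ->
  (#|W n i j|%:R : rat) = W_formula n i j.
Proof.
move=> n_gt0; rewrite card_W_nat natr_sum /W_formula big_mkord; apply: eq_bigr => d _.
have : (d <= minn i j)%N by rewrite -ltnS.
rewrite leq_min => /andP[di dj].
by rewrite /= addn1 W_formula_summandE //; lia.
Qed.
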